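(* Let $\mathcal K$ be a topological Kuranishi atlas on $X$. Then the maps $|\mathrm{pr}_{\mathcal K}|:|\mathbf E_{\mathcal K}|\to|\mathcal K|$ and $|0_{\mathcal K}|,|\mathfrak s_{\mathcal K}|:|\mathcal K|\to|\mathbf E_{\mathcal K}|$ (induced by $\mathrm{pr}_I$, $0_I$, $\mathfrak s_I$) are well defined and continuous, and satisfy $|\mathrm{pr}_{\mathcal K}|\circ|\mathfrak s_{\mathcal K}|=|\mathrm{pr}_{\mathcal K}|\circ|0_{\mathcal K}|=\mathrm{id}_{|\mathcal K|}$. The set $Z:=\{p\in|\mathcal K|:|\mathfrak s_{\mathcal K}|(p)=|0_{\mathcal K}|(p)\}$ equals $\pi_{\mathcal K}\big(\bigsqcup_{I\in\mathcal I_{\mathcal K}}\{I\}\times\mathfrak s_I^{-1}(0_I)\big)$, and the quotient topology on $Z$ (obtained from $\bigsqcup_I\{I\}\times\mathfrak s_I^{-1}(0_I)$ with the relative topology, modulo the equivalence relation generated by the relations $(I,x)\sim(J,\phi_{IJ}(x))$ with $x\in U_{IJ}\cap\mathfrak s_I^{-1}(0_I)$) coincides with the subspace topology from $|\mathcal K|$. Moreover the map $\iota_{\mathcal K}:X\to|\mathcal K|$, $p\mapsto\pi_{\mathcal K}(I,\psi_I^{-1}(p))$, is independent of the choice of $I\in\mathcal I_{\mathcal K}$ with $p\in F_I$, and is a homeomorphism from $X$ onto $Z$ (with the subspace topology).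
   Context: Notation: for subsets $V'\subset V$ of a topological space, $V'\sqsubset V$ means the closure of $V'$ in $V$ is compact. $X$ is a compact metrizable space. Charts: a topological Kuranishi chart for $X$ with open footprint $F\subset X$ is a tuple $\mathbf K=(U,\mathbb E,\mathfrak s,\psi)$ where $U$ is a separable, locally compact, metrizable space; $\mathbb E$ is a separable, locally compact, metrizable space with continuous maps $\mathrm{pr}:\mathbb E\to U$ and $0:U\to\mathbb E$ with $\mathrm{pr}\circ0=\mathrm{id}_U$; $\mathfrak s:U\to\mathbb E$ is continuous with $\mathrm{pr}\circ\mathfrak s=\mathrm{id}_U$; and $\psi$ is a homeomorphism from $\mathfrak s^{-1}(0):=\{x\in U:\mathfrak s(x)=0(x)\}$ onto $F$. Coordinate changes: for charts $\mathbf K_I,\mathbf K_J$ (components indexed by $I,J$) with $F_I\cap F_J\neq\emptyset$, a coordinate change $\widehat\Phi_{IJ}:\mathbf K_I\to\mathbf K_J$ consists of an open set $U_{IJ}\subset U_I$ with $U_{IJ}\cap\mathfrak s_I^{-1}(0_I)=\psi_I^{-1}(F_I\cap F_J)$ and a topological embedding $\widehat\Phi_{IJ}:\mathrm{pr}_I^{-1}(U_{IJ})\to\mathbb E_J$ such that there is a topological embedding $\phi_{IJ}:U_{IJ}\to U_J$ with $\mathrm{pr}_J\circ\widehat\Phi_{IJ}=\phi_{IJ}\circ\mathrm{pr}_I$, $0_J\circ\phi_{IJ}=\widehat\Phi_{IJ}\circ0_I$ and $\mathfrak s_J\circ\phi_{IJ}=\widehat\Phi_{IJ}\circ\mathfrak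 s_I$ on $U_{IJ}$, and $\phi_{IJ}=\psi_J^{-1}\circ\psi_I$ on $U_{IJ}\cap\mathfrak s_I^{-1}(0_I)$. Atlases: a covering family of basic charts is a finite family $(\mathbf K_i)_{i=1,\dots,N}$ of charts whose footprints cover $X$; $\mathcal I_{\mathcal K}$ is the set of nonempty $I\subset\{1,\dots,N\}$ with $F_I:=\bigcap_{i\in I}F_i\neq\emptyset$. Transition data consist of a chart $\mathbf K_J$ with footprint $F_J$ for each $J\in\mathcal I_{\mathcal K}$ with $|J|\ge2$ (and $\mathbf K_{\{i\}}:=\mathbf K_i$), and a coordinate change $\widehat\Phi_{IJ}:\mathbf K_I\to\mathbf K_J$ for all $I\subsetneq J$ in $\mathcal I_{\mathcal K}$. We set $U_{II}:=U_I$, $\phi_{II}:=\mathrm{id}_{U_I}$. For $I\subsetneq J\subsetneq K$ let $U_{IJK}:=U_{IJ}\cap\phi_{IJ}^{-1}(U_{JK})$. The triple satisfies the weak cocycle condition if $\widehat\Phi_{JK}\circ\widehat\Phi_{IJ}=\widehat\Phi_{IK}$ on $\mathrm{pr}_I^{-1}(U_{IJK}\cap U_{IK})$; the cocycle condition if in addition $U_{IJK}\subset U_{IK}$; the strong cocycle condition if in addition $U_{IJK}=U_{IK}$. A weak topological Kuranishi atlas $\mathcal K$ is a covering family with transition data satisfying the weak cocycle condition for all such triples; a topological Kuranishi atlas is one satisfying the cocycle condition for all triples. Virtual neighbourhood: for a topological Kuranishi atlas, $|\mathcal K|$ is the quotient of $\bigsqcup_{I\in\mathcal I_{\mathcal K}}U_I=\{(I,x):x\in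 U_I\}$ by the equivalence relation generated by $(I,x)\sim(J,\phi_{IJ}(x))$ for $I\subset J$, $x\in U_{IJ}$, with the quotient topology and projection $\pi_{\mathcal K}$; similarly $|\mathbf E_{\mathcal K}|$ is the quotient of $\bigsqcup_I\mathbb E_I$ by the relation generated by $(I,e)\sim(J,\widehat\Phi_{IJ}(e))$ for $e\in\mathrm{pr}_I^{-1}(U_{IJ})$, with projection $\pi_{\mathbf E_{\mathcal K}}$. *)

From mathcomp Require Import all_boot.
From Stdlib Require Import Reals Relation_Operators List.

Set Implicit Arguments.
Unset Strict Implicit.


Definition topology (T : Type) := (T -> Prop) -> Prop.

Definition IsTopology (T : Type) (op : topology T) : Prop :=
  op (fun _ => True) /\
  (forall A B, op A -> op B -> op (fun x => A x /\ B x)) /\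
  (forall F : (T -> Prop) -> Prop,
     (forall A, F A -> op A) -> op (fun x => exists A, F A /\ A x)).

Definition compact_set (T : Type) (op : topology T) (K : T -> Prop) : Prop :=
  forall F : (T -> Prop) -> Prop,
    (forall A, F A -> op A) ->
    (forall x, K x -> exists A, F A /\ A x) ->
    exists l : list (T -> Prop),
      (forall A, In A l -> F A) /\ (forall x, K x -> exists A, In A l /\ A x).

Definition compact_space (T : Type) (op : topology T) : Prop :=
  compact_set op (fun _ => True).

Definition metrizable (T : Type) (op : topology T) : Prop :=
  exists d : T -> T -> R,
    (forall x y, (0 <= d x y)%R) /\
    (forall x y, d x y = 0%R <-> x = y) /\
    (forall x y, d x y = d y x) /\
    (forall x y z, (d x z <= d x y + d y z)%R) /\
    (forall V, op V <->
       forall x, V x -> exists eps : R, (0 < eps)%R /\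
                 forall y, (d x y < eps)%R -> V y).

Definition separable (T : Type) (op : topology T) : Prop :=
  exists D : T -> Prop,
    (exists f : nat -> option T, forall x, D x -> exists n, f n = Some x) /\
    (forall V, op V -> (exists x, V x) -> exists x, V x /\ D x).

Definition locally_compact (T : Type) (op : topology T) : Prop :=
  forall x, exists V K, op V /\ V x /\ compact_set op K /\ (forall y, V y -> K y).

(* topology of the subspace P, expressed on predicates of T:
   V is open in the subspace P iff it is the trace of an open set *)
Definition sub_open (T : Type) (op : topology T) (P V : T -> Prop) : Prop :=
  exists W, op W /\ forall x, P x -> (V x <-> W x).

Definition continuous (A B : Type) (opA : topology A) (opB : topology B)
  (f : A -> B) : Prop :=
  forall W, opB W -> opA (fun x => W (f x)).

Definition cont_on (A B : Type) (opA : topology A) (P : A -> Prop)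
  (opB : topology B) (Q : B -> Prop) (f : A -> B) : Prop :=
  (forall x, P x -> Q (f x)) /\
  forall W, opB W -> sub_open opA P (fun x => W (f x)).

Definition homeo_on (A B : Type) (opA : topology A) (P : A -> Prop)
  (opB : topology B) (Q : B -> Prop) (f : A -> B) : Prop :=
  exists g : B -> A,
    cont_on opA P opB Q f /\ cont_on opB Q opA P g /\
    (forall x, P x -> g (f x) = x) /\ (forall y, Q y -> f (g y) = y).

Definition embedding_on (A B : Type) (opA : topology A) (P : A -> Prop)
  (opB : topology B) (f : A -> B) : Prop :=
  cont_on opA P opB (fun _ => True) f /\
  (forall x y, P x -> P y -> f x = f y -> x = y) /\
  forall V, sub_open opA P V ->
    exists W, opB W /\ forall x, P x -> (V x <-> W (f x)).

Unset Implicit Arguments.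

(* Basic charts are indexed by 'I_N; charts of the transition data by  *)
(* the sets I : {set 'I_N} (the basic chart K_i is the chart of [set i]). *)

Record TopKAtlas (X : Type) (tX : topology X) (N : nat) := {
  F0 : 'I_N -> X -> Prop;
  U : {set 'I_N} -> Type;
  E : {set 'I_N} -> Type;
  tU : forall I, topology (U I);
  tE : forall I, topology (E I);
  pr : forall I, E I -> U I;
  zr : forall I, U I -> E I;
  sc : forall I, U I -> E I;
  psi : forall I, U I -> X;                     (* footprint map on s_I^-1(0_I) *)
  UIJ : forall I J : {set 'I_N}, U I -> Prop;
  phi : forall I J : {set 'I_N}, U I -> U J;    (* phi_IJ (relevant on U_IJ) *)
  Phi : forall I J : {set 'I_N}, E I -> E J;    (* Phi_IJ (relevant on pr^-1 U_IJ) *)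
}.

Arguments F0 {X tX N}.
Arguments U {X tX N}.
Arguments E {X tX N}.
Arguments tU {X tX N}.
Arguments tE {X tX N}.
Arguments pr {X tX N} _ {I}.
Arguments zr {X tX N} _ {I}.
Arguments sc {X tX N} _ {I}.
Arguments psi {X tX N} _ {I}.
Arguments UIJ {X tX N} _ I J.
Arguments phi {X tX N} _ I J.
Arguments Phi {X tX N} _ I J.

Section Atlas.
Variables (X : Type) (tX : topology X) (N : nat) (A : TopKAtlas X tX N).

Definition FI (I : {set 'I_N}) (p : X) : Prop := forall i, i \in I -> F0 A i p.

Definition inK (I : {set 'I_N}) : Prop := I != set0 /\ exists p, FI I p.

Definition Zs (I : {set 'I_N}) (x : U A I) : Prop := sc A x = zr A x.

Definition IsChart (I : {set 'I_N}) : Prop :=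
  IsTopology (tU A I) /\ IsTopology (tE A I) /\
  separable (tU A I) /\ locally_compact (tU A I) /\ metrizable (tU A I) /\
  separable (tE A I) /\ locally_compact (tE A I) /\ metrizable (tE A I) /\
  continuous (tE A I) (tU A I) (pr A) /\
  continuous (tU A I) (tE A I) (zr A) /\
  continuous (tU A I) (tE A I) (sc A) /\
  (forall x : U A I, pr A (zr A x) = x) /\
  (forall x : U A I, pr A (sc A x) = x) /\
  homeo_on (tU A I) (Zs I) tX (FI I) (psi A).

Definition IsCoordChange (I J : {set 'I_N}) : Prop :=
  (tU A I) (UIJ A I J) /\
  (forall x, (UIJ A I J x /\ Zs I x) <-> (Zs I x /\ FI J (psi A x))) /\
  embedding_on (tE A I) (fun e => UIJ A I J (pr A e)) (tE A J) (Phi A I J) /\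
  embedding_on (tU A I) (UIJ A I J) (tU A J) (phi A I J) /\
  (forall e, UIJ A I J (pr A e) -> pr A (Phi A I J e) = phi A I J (pr A e)) /\
  (forall x, UIJ A I J x -> zr A (phi A I J x) = Phi A I J (zr A x)) /\
  (forall x, UIJ A I J x -> sc A (phi A I J x) = Phi A I J (sc A x)) /\
  (forall x, UIJ A I J x -> Zs I x ->
     Zs J (phi A I J x) /\ psi A (phi A I J x) = psi A x).

Definition UIJK (I J K : {set 'I_N}) (x : U A I) : Prop :=
  UIJ A I J x /\ UIJ A J K (phi A I J x).

(* cocycle condition (weak cocycle condition + U_IJK subset U_IK) *)
Definition Cocycle (I J K : {set 'I_N}) : Prop :=
  (forall e, UIJK I J K (pr A e) -> UIJ A I K (pr A e) ->
     Phi A J K (Phi A I J e) = Phi A I K e) /\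
  (forall x, UIJK I J K x -> UIJ A I K x).

Definition IsTopKAtlas : Prop :=
  (forall i, tX (F0 A i)) /\
  (forall p, exists i, F0 A i p) /\
  (forall I, inK I -> IsChart I) /\
  (forall I J, inK I -> inK J -> I \proper J -> IsCoordChange I J) /\
  (forall I J K, inK I -> inK J -> inK K -> I \proper J -> J \proper K ->
     Cocycle I J K).

Definition Idx := {I : {set 'I_N} | inK I}.

Definition DU := {I : Idx & U A (proj1_sig I)}.
Definition DE := {I : Idx & E A (proj1_sig I)}.

Definition DU_top : topology DU :=
  fun W => forall I : Idx, tU A (proj1_sig I) (fun x => W (existT _ I x)).
Definition DE_top : topology DE :=
  fun W => forall I : Idx, tE A (proj1_sig I) (fun e => W (existT _ I e)).

Definition stepK (a b : DU) : Prop :=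
  proj1_sig (projT1 a) \proper proj1_sig (projT1 b) /\
  UIJ A _ (proj1_sig (projT1 b)) (projT2 a) /\
  projT2 b = phi A _ _ (projT2 a).

Definition stepE (a b : DE) : Prop :=
  proj1_sig (projT1 a) \proper proj1_sig (projT1 b) /\
  UIJ A _ (proj1_sig (projT1 b)) (pr A (projT2 a)) /\
  projT2 b = Phi A _ _ (projT2 a).

Definition simK := clos_refl_sym_trans DU stepK.
Definition simE := clos_refl_sym_trans DE stepE.

(* quotients, realised as the sets of equivalence classes *)
Definition VK := {C : DU -> Prop | exists t, C = simK t}.
Definition VE := {C : DE -> Prop | exists t, C = simE t}.

Definition piVK (t : DU) : VK := exist _ (simK t) (ex_intro _ t erefl).
Definition piVE (t : DE) : VE := exist _ (simE t) (ex_intro _ t erefl).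

Definition VK_top : topology VK := fun V => DU_top (fun t => V (piVK t)).
Definition VE_top : topology VE := fun V => DE_top (fun t => V (piVE t)).

Definition prDU (e : DE) : DU := existT _ (projT1 e) (pr A (projT2 e)).
Definition zrDU (t : DU) : DE := existT _ (projT1 t) (zr A (projT2 t)).
Definition scDU (t : DU) : DE := existT _ (projT1 t) (sc A (projT2 t)).

Definition ZDU (t : DU) : Prop := Zs _ (projT2 t).
Definition DU0 := {t : DU | ZDU t}.

Definition step0 (a b : DU0) : Prop := stepK (proj1_sig a) (proj1_sig b).

End Atlas.

Arguments FI {X tX N} A I p.
Arguments inK {X tX N} A I.
Arguments Zs {X tX N} A {I} x.
Arguments IsTopKAtlas {X tX N} A.
Arguments Idx {X tX N} A.
Arguments DU {X tX N} A.
Arguments DE {X tX N} A.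
Arguments DU_top {X tX N} A _.
Arguments DE_top {X tX N} A _.
Arguments stepK {X tX N} A a b.
Arguments stepE {X tX N} A a b.
Arguments simK {X tX N} A _ _.
Arguments simE {X tX N} A _ _.
Arguments VK {X tX N} A.
Arguments VE {X tX N} A.
Arguments piVK {X tX N} A t.
Arguments piVE {X tX N} A t.
Arguments VK_top {X tX N} A _.
Arguments VE_top {X tX N} A _.
Arguments prDU {X tX N} A e.
Arguments zrDU {X tX N} A t.
Arguments scDU {X tX N} A t.
Arguments ZDU {X tX N} A t.
Arguments DU0 {X tX N} A.
Arguments step0 {X tX N} A a b.

(* The maps [pr_I], [0_I], [s_I] intertwine the coordinate changes, so they respect the
   generating relations of the two quotients and descend to continuous maps between them.
   Coordinate changes are injective on the bundles and send [s_I = 0_I] into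
   [s_J = 0_J], so the zero set is saturated; it is also closed (the bundles are
   metrizable, hence Hausdorff), so its subspace topology in [|K|] is the quotient
   topology of the zero sets.  Two zero-set points with the same footprint image are
   identified in the chart of the union of their index sets, so the local inverses
   [psi_I^-1] glue to [iota_K], with inverse induced by the [psi_I]; continuity of both
   is checked locally on the open footprints [F_i] and on the charts [U_I]. *)

From mathcomp Require Import all_boot.
From Stdlib Require Import Reals Relation_Operators List.
From Stdlib Require Import Classical ClassicalEpsilon FunctionalExtensionality
  PropExtensionality ProofIrrelevance Lra.

Set Implicit Arguments.
Unset Strict Implicit.

Notation crst := clos_refl_sym_trans.

Lemma pred_ext (T : Type) (P Q : T -> Prop) : (forall x, P x <-> Q x) -> P = Q.
Proof.
by move=> PQ; apply: functional_extensionality => x; apply: propositional_extensionality.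
Qed.

Lemma crst_map (T T' : Type) (R : T -> T -> Prop) (R' : T' -> T' -> Prop) (f : T -> T') :
  (forall a b, R a b -> R' (f a) (f b)) ->
  forall a b, crst T R a b -> crst T' R' (f a) (f b).
Proof.
move=> fR a b; elim=> {a b} [a b /fR|a|a b _|a b c _ IHab _ IHbc].
- exact: rst_step.
- exact: rst_refl.
- exact: rst_sym.
- exact: rst_trans IHab IHbc.
Qed.

Section ReflSymTransClosure.
Variables (T : Type) (R : T -> T -> Prop).

Lemma crst_invariant (P : T -> Prop) :
  (forall a b, R a b -> (P a <-> P b)) ->
  forall a b, crst T R a b -> (P a <-> P b).
Proof.
move=> RP a b; elim=> {a b} [a b /RP|a|a b _|a b c _ IHab _ IHbc] //; tauto.
Qed.

Lemma crst_const_on (P : T -> Prop) (Y : Type) (f : T -> Y) :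
  (forall a b, R a b -> (P a <-> P b)) ->
  (forall a b, R a b -> P a -> f a = f b) ->
  forall a b, crst T R a b -> P a -> f a = f b.
Proof.
move=> RP Rf a b ab; elim: ab => {a b} [a b /Rf //|a //|a b ab fab Pb|a b c ab fab _ fbc Pa].
- by rewrite fab // (crst_invariant RP ab).
- by rewrite fab // fbc // -(crst_invariant RP ab).
Qed.

Lemma crst_sub (P : T -> Prop) :
  (forall a b, R a b -> (P a <-> P b)) ->
  forall a b : {x | P x}, crst T R (proj1_sig a) (proj1_sig b) <->
    crst {x | P x} (fun a b => R (proj1_sig a) (proj1_sig b)) a b.
Proof.
move=> RP a b; split; last by apply: crst_map => {}a {}b.
case: a b => [a Pa] [b Pb] /= ab; elim: ab Pa Pb => {a b}
  [a b ab|a|a b _ IHab|a b c ab IHab _ IHbc] Pa Pb.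
- exact: rst_step.
- by rewrite (proof_irrelevance _ Pa Pb); apply: rst_refl.
- exact/rst_sym/IHab.
- have Pb' : P b by rewrite -(crst_invariant RP ab).
  exact: rst_trans (IHab Pa Pb') (IHbc Pb' Pb).
Qed.

(* For [R] = [stepK A] or [stepE A] this is convertibly [VK A] or [VE A]. *)
Definition quot := {C : T -> Prop | exists t, C = crst T R t}.

Definition cls (t : T) : quot := exist _ (crst T R t) (ex_intro _ t erefl).

Lemma eq_cls a b : cls a = cls b <-> crst T R a b.
Proof.
split=> [/(f_equal (@proj1_sig _ _)) /= ab|ab].
- by rewrite ab; apply: rst_refl.
- apply: subset_eq_compat; apply: pred_ext => c.
  split=> [ac|bc]; [apply: rst_trans (rst_sym _ _ _ _ ab) ac|apply: rst_trans ab bc].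
Qed.

Lemma cls_surj p : exists t, cls t = p.
Proof. by case: p => C [t Ct]; exists t; apply: subset_eq_compat; rewrite Ct. Qed.

Definition repr (p : quot) : T := proj1_sig (constructive_indefinite_description _ (cls_surj p)).

Lemma reprK p : cls (repr p) = p.
Proof. exact: proj2_sig (constructive_indefinite_description _ (cls_surj p)). Qed.

Definition quot_top (op : topology T) : topology quot := fun V => op (fun t => V (cls t)).

End ReflSymTransClosure.

Arguments cls {T R} t.
Arguments repr {T R} p.

Section QuotientMap.
Variables (T T' : Type) (R : T -> T -> Prop) (R' : T' -> T' -> Prop) (f : T -> T').
Hypothesis fR : forall a b, R a b -> R' (f a) (f b).

Definition quot_map (p : quot R) : quot R' := cls (f (repr p)).

Lemma quot_mapE t : quot_map (cls t) = cls (f t).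
Proof. by apply/eq_cls/(crst_map fR)/eq_cls; rewrite reprK. Qed.

Lemma quot_map_continuous (op : topology T) (op' : topology T') :
  continuous op op' f -> continuous (@quot_top _ R op) (@quot_top _ R' op') quot_map.
Proof.
move=> fcont W W_open; rewrite /quot_top.
have -> : (fun t => W (quot_map (cls t))) = (fun t => W (cls (f t))).
  by apply: pred_ext => t; rewrite quot_mapE.
exact: fcont _ W_open.
Qed.

End QuotientMap.

Section Topology.
Variables (T : Type) (op : topology T).
Hypothesis op_top : IsTopology op.

Lemma open_of_nbhs (P : T -> Prop) :
  (forall x, P x -> exists B, op B /\ B x /\ forall y, B y -> P y) -> op P.
Proof.
move=> Pnbhs; case: op_top => _ [_ op_union].
have -> : P = (fun x => exists B, (op B /\ forall y, B y -> P y) /\ B x).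
  apply: pred_ext => x; split=> [/Pnbhs [B [? [? ?]]]|[B [[_ BP] /BP //]]].
  by exists B.
by apply: op_union => B [].
Qed.

Lemma open_or (P Q : T -> Prop) : op P -> op Q -> op (fun x => P x \/ Q x).
Proof.
move=> Popen Qopen; apply: open_of_nbhs => x [Px|Qx].
- by exists P; split=> //; split=> // y; left.
- by exists Q; split=> //; split=> // y; right.
Qed.

Lemma open_and (P Q : T -> Prop) : op P -> op Q -> op (fun x => P x /\ Q x).
Proof. by case: op_top => _ [op_inter _]; apply: op_inter. Qed.

Lemma neq_open (S : Type) (opS : topology S) (f g : T -> S) :
  metrizable opS -> continuous op opS f -> continuous op opS g ->
  op (fun x => f x <> g x).
Proof.
move=> [d [d_ge0 [d_eq0 [d_sym [d_tri opS_balls]]]]] fcont gcont.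
have ball_open c r : opS (fun y => (d c y < r)%R).
  apply/opS_balls => y cy; exists (r - d c y)%R; split; first lra.
  by move=> z yz; have := d_tri c y z; lra.
apply: open_of_nbhs => x fgx.
have d_pos : (0 < d (f x) (g x))%R.
  case: (Rle_lt_or_eq_dec _ _ (d_ge0 (f x) (g x))) => // /esym/d_eq0 //.
(* a common value [f y = g y] within [r] of both [f x] and [g x] would violate the
   triangle inequality *)
set r := (d (f x) (g x) / 2)%R.
exists (fun y => (d (f x) (f y) < r)%R /\ (d (g x) (g y) < r)%R); split; last split.
- exact: open_and (fcont _ (ball_open _ _)) (gcont _ (ball_open _ _)).
- by rewrite /r (proj2 (d_eq0 _ _) erefl) (proj2 (d_eq0 _ _) erefl); split; lra.
- move=> y [fy gy] fgy; have := d_tri (f x) (f y) (g x).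
  by rewrite fgy (d_sym (g y)) /r in fy gy *; lra.
Qed.

Lemma sub_open_ext (P P' V V' : T -> Prop) :
  (forall x, P' x -> P x /\ (V x <-> V' x)) -> sub_open op P V -> sub_open op P' V'.
Proof.
move=> PV [W [Wopen VW]]; exists W; split=> // x /PV [Px VV']; rewrite -VV'; exact: VW.
Qed.

Lemma continuous_of_open_cover (S : Type) (opS : topology S) (f : T -> S)
    (Ix : Type) (F : Ix -> T -> Prop) :
  (forall i, op (F i)) -> (forall x, exists i, F i x) ->
  (forall i W, opS W -> sub_open op (F i) (fun x => W (f x))) ->
  continuous op opS f.
Proof.
move=> Fopen Fcover fcont W Wopen; apply: open_of_nbhs => x Wfx.
have [i Fx] := Fcover x; have [O [Oopen WO]] := fcont i W Wopen.
exists (fun y => F i y /\ O y); split; first exact: open_and.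
by split=> [|y [Fy Oy]]; rewrite ?WO //; rewrite -WO.
Qed.

End Topology.

Definition sum_top (I : Type) (T : I -> Type) (top : forall i, topology (T i)) :
  topology {i & T i} :=
  fun W => forall i, top i (fun x => W (existT T i x)).

Lemma sum_topology (I : Type) (T : I -> Type) (top : forall i, topology (T i)) :
  (forall i, IsTopology (top i)) ->
  IsTopology (sum_top top).
Proof.
move=> tops; split; [|split].
- by move=> i; case: (tops i).
- by move=> W W' Wopen W'open i; case: (tops i) => _ [inter _]; apply: inter.
- move=> F Fopen i; case: (tops i) => _ [_ union].
  have -> : (fun x => exists B, F B /\ B (existT T i x)) =
      (fun x => exists B', (exists B, F B /\ B' = (fun y => B (existT T i y))) /\ B' x).
    apply: pred_ext => x; split=> [[B [FB Bx]]|[_ [[B [FB ->]] Bx]]]; last by exists B.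
    by exists (fun y => B (existT T i y)); split=> //; exists B.
  by apply: union => _ [B [FB ->]]; apply: Fopen.
Qed.

Lemma sub_open_quot (T Q : Type) (op : topology T) (pi : T -> Q) (Z V : Q -> Prop)
    (ZT : T -> Prop) :
  IsTopology op -> (forall t, Z (pi t) <-> ZT t) -> op (fun t => ~ ZT t) ->
  (forall p, V p -> Z p) ->
  sub_open (fun W => op (fun t => W (pi t))) Z V <-> sub_open op ZT (fun t => V (pi t)).
Proof.
move=> op_top ZZT nZT_open VZ; split=> [[W [Wopen VW]]|[W [Wopen VW]]].
  by exists (fun t => W (pi t)); split=> // t /ZZT /VW.
(* the complement of [Z \ V] is open, and it meets [Z] exactly in [V] *)
exists (fun p => ~ (Z p /\ ~ V p)); split.
- have -> : (fun t => ~ (Z (pi t) /\ ~ V (pi t))) = (fun t => ~ ZT t \/ W t).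
    apply: pred_ext => t; rewrite ZZT; have := VW t.
    by case: (classic (ZT t)); case: (classic (V (pi t))); tauto.
  exact: open_or.
- by move=> p Zp; case: (classic (V p)); tauto.
Qed.

Lemma sum_sub_open (I : Type) (T : I -> Type) (top : forall i, topology (T i))
    (P V : {i & T i} -> Prop) :
  (forall i, sub_open (top i) (fun x => P (existT T i x)) (fun x => V (existT T i x))) ->
  sub_open (sum_top top) P V.
Proof.
move=> PV; pose W i := proj1_sig (constructive_indefinite_description _ (PV i)).
have W_spec i := proj2_sig (constructive_indefinite_description _ (PV i)).
exists (fun t => W (projT1 t) (projT2 t)); split=> [i|[i x]].
- exact: (proj1 (W_spec i)).
- exact: (proj2 (W_spec i) x).
Qed.

Section Atlas.
Variables (X : Type) (tX : topology X) (N : nat) (A : TopKAtlas X tX N).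
Hypothesis HA : IsTopKAtlas A.

Lemma chart_of (I : Idx A) : IsChart X tX N A (proj1_sig I).
Proof. by case: HA => _ [_ [charts _]]; apply: charts; case: I. Qed.

Lemma coord_change_of (I J : Idx A) :
  proj1_sig I \proper proj1_sig J -> IsCoordChange X tX N A (proj1_sig I) (proj1_sig J).
Proof. by case: HA => _ [_ [_ [changes _]]]; apply: changes; [case: I|case: J]. Qed.

Section Chart.
Variable I : Idx A.

Lemma tU_topology : IsTopology (tU A (proj1_sig I)).
Proof. by have := chart_of I; rewrite /IsChart; tauto. Qed.

Lemma tE_metrizable : metrizable (tE A (proj1_sig I)).
Proof. by have := chart_of I; rewrite /IsChart; tauto. Qed.

Lemma pr_continuous :
  continuous (tE A (proj1_sig I)) (tU A (proj1_sig I)) (@pr _ _ _ A (proj1_sig I)).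
Proof. by have := chart_of I; rewrite /IsChart; tauto. Qed.

Lemma zr_continuous :
  continuous (tU A (proj1_sig I)) (tE A (proj1_sig I)) (@zr _ _ _ A (proj1_sig I)).
Proof. by have := chart_of I; rewrite /IsChart; tauto. Qed.

Lemma sc_continuous :
  continuous (tU A (proj1_sig I)) (tE A (proj1_sig I)) (@sc _ _ _ A (proj1_sig I)).
Proof. by have := chart_of I; rewrite /IsChart; tauto. Qed.

Lemma pr_zr (x : U A (proj1_sig I)) : pr A (zr A x) = x.
Proof. by move: x; have := chart_of I; rewrite /IsChart; tauto. Qed.

Lemma pr_sc (x : U A (proj1_sig I)) : pr A (sc A x) = x.
Proof. by move: x; have := chart_of I; rewrite /IsChart; tauto. Qed.

Lemma psi_homeo : homeo_on (tU A (proj1_sig I)) (Zs A) tX (FI A (proj1_sig I)) (psi A).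
Proof. by have := chart_of I; rewrite /IsChart; tauto. Qed.

Lemma psi_inj (x y : U A (proj1_sig I)) : Zs A x -> Zs A y -> psi A x = psi A y -> x = y.
Proof.
have [g [_ [_ [gpsi _]]]] := psi_homeo.
by move=> Zx Zy xy; rewrite -(gpsi x Zx) -(gpsi y Zy) xy.
Qed.

End Chart.

Section CoordChange.
Variables I J : Idx A.
Hypothesis IJ : proj1_sig I \proper proj1_sig J.

Let cc := coord_change_of IJ.

Lemma Phi_inj (e f : E A (proj1_sig I)) :
  UIJ A _ (proj1_sig J) (pr A e) -> UIJ A _ (proj1_sig J) (pr A f) ->
  Phi A _ (proj1_sig J) e = Phi A _ _ f -> e = f.
Proof. by case: cc => _ [_ [[_ [inj _]] _]]; apply: inj. Qed.

Lemma pr_Phi (e : E A (proj1_sig I)) :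
  UIJ A _ (proj1_sig J) (pr A e) -> pr A (Phi A _ (proj1_sig J) e) = phi A _ _ (pr A e).
Proof. by case: cc => _ [_ [_ [_ [prP _]]]]; apply: prP. Qed.

Lemma zr_phi (x : U A (proj1_sig I)) :
  UIJ A _ (proj1_sig J) x -> zr A (phi A _ (proj1_sig J) x) = Phi A _ _ (zr A x).
Proof. by case: cc => _ [_ [_ [_ [_ [zrP _]]]]]; apply: zrP. Qed.

Lemma sc_phi (x : U A (proj1_sig I)) :
  UIJ A _ (proj1_sig J) x -> sc A (phi A _ (proj1_sig J) x) = Phi A _ _ (sc A x).
Proof. by case: cc => _ [_ [_ [_ [_ [_ [scP _]]]]]]; apply: scP. Qed.

Lemma UIJ_Zs (x : U A (proj1_sig I)) :
  Zs A x -> FI A (proj1_sig J) (psi A x) -> UIJ A _ (proj1_sig J) x.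
Proof. by case: cc => _ [UZ _] Zx Fx; case: (proj2 (UZ x) (conj Zx Fx)). Qed.

Lemma phi_Zs (x : U A (proj1_sig I)) :
  UIJ A _ (proj1_sig J) x -> Zs A x ->
  Zs A (phi A _ (proj1_sig J) x) /\ psi A (phi A _ (proj1_sig J) x) = psi A x.
Proof. by case: cc => _ [_ [_ [_ [_ [_ [_ phiZ]]]]]]; apply: phiZ. Qed.

End CoordChange.

Lemma stepE_prDU a b : stepE A a b -> stepK A (prDU A a) (prDU A b).
Proof. by case: a b => [I e] [J f] [IJ [Ue /= ->]]; split=> //; rewrite /= pr_Phi. Qed.

Lemma stepK_zrDU a b : stepK A a b -> stepE A (zrDU A a) (zrDU A b).
Proof. by case: a b => [I x] [J y] [IJ [Ux /= ->]]; split=> //=; rewrite pr_zr ?zr_phi. Qed.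

Lemma stepK_scDU a b : stepK A a b -> stepE A (scDU A a) (scDU A b).
Proof. by case: a b => [I x] [J y] [IJ [Ux /= ->]]; split=> //=; rewrite pr_sc ?sc_phi. Qed.

Definition ZE (e : DE A) : Prop := projT2 e = zr A (pr A (projT2 e)).

Lemma stepE_ZE a b : stepE A a b -> (ZE a <-> ZE b).
Proof.
case: a b => [I e] [J f] [IJ [Ue /= ->]]; rewrite /ZE /=; split=> Ze.
- by rewrite pr_Phi // zr_phi // -Ze.
- apply: (Phi_inj IJ) => //; first by rewrite pr_zr.
  by rewrite -zr_phi // -pr_Phi.
Qed.

Lemma stepK_ZDU a b : stepK A a b -> (ZDU A a <-> ZDU A b).
Proof.
case: a b => [I x] [J y] [IJ [Ux /= ->]]; rewrite /ZDU /=; split=> [Zx|Zy].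
- exact: (proj1 (phi_Zs IJ Ux Zx)).
- by apply: (Phi_inj IJ); rewrite ?pr_zr ?pr_sc // -sc_phi // -zr_phi.
Qed.

Lemma stepK_psi a b : stepK A a b -> ZDU A a -> psi A (projT2 a) = psi A (projT2 b).
Proof. by case: a b => [I x] [J y] [IJ [Ux /= ->]] Zx; rewrite (proj2 (phi_Zs IJ Ux Zx)). Qed.

Definition prK : VE A -> VK A := @quot_map _ _ (stepE A) (stepK A) (prDU A).
Definition zK : VK A -> VE A := @quot_map _ _ (stepK A) (stepE A) (zrDU A).
Definition sK : VK A -> VE A := @quot_map _ _ (stepK A) (stepE A) (scDU A).

Definition Zset (p : VK A) : Prop := sK p = zK p.

Lemma prK_piVE e : prK (piVE A e) = piVK A (prDU A e).
Proof. exact: quot_mapE stepE_prDU e. Qed.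

Lemma zK_piVK t : zK (piVK A t) = piVE A (zrDU A t).
Proof. exact: quot_mapE stepK_zrDU t. Qed.

Lemma sK_piVK t : sK (piVK A t) = piVE A (scDU A t).
Proof. exact: quot_mapE stepK_scDU t. Qed.

Lemma prK_continuous : continuous (VE_top A) (VK_top A) prK.
Proof.
by apply: (quot_map_continuous stepE_prDU) => W Wopen I; exact: pr_continuous _ (Wopen I).
Qed.

Lemma zK_continuous : continuous (VK_top A) (VE_top A) zK.
Proof.
by apply: (quot_map_continuous stepK_zrDU) => W Wopen I; exact: zr_continuous _ (Wopen I).
Qed.

Lemma sK_continuous : continuous (VK_top A) (VE_top A) sK.
Proof.
by apply: (quot_map_continuous stepK_scDU) => W Wopen I; exact: sc_continuous _ (Wopen I).
Qed.

Lemma prK_sK p : prK (sK p) = p.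
Proof. by have [[I x] <-] := cls_surj p; rewrite sK_piVK prK_piVE /prDU /= pr_sc. Qed.

Lemma prK_zK p : prK (zK p) = p.
Proof. by have [[I x] <-] := cls_surj p; rewrite zK_piVK prK_piVE /prDU /= pr_zr. Qed.

Lemma Zset_piVK t : Zset (piVK A t) <-> ZDU A t.
Proof.
rewrite /Zset sK_piVK zK_piVK eq_cls; case: t => I x; split=> [sz|Zx]; last first.
  by rewrite /scDU /zrDU /ZDU /= Zx; apply: rst_refl.
have /(crst_invariant stepE_ZE sz) : ZE (zrDU A (existT _ I x)) by rewrite /ZE /= pr_zr.
by rewrite /ZE /ZDU /Zs /= pr_sc.
Qed.

Lemma Zset_iff p : Zset p <-> exists t, ZDU A t /\ piVK A t = p.
Proof.
split=> [Zp|[t [Zt <-]]]; last exact/Zset_piVK.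
have pE : piVK A (repr p) = p := reprK p.
by exists (repr p); rewrite -Zset_piVK pE.
Qed.

Lemma piVK_DU0 (a b : DU0 A) :
  piVK A (proj1_sig a) = piVK A (proj1_sig b) <-> crst (DU0 A) (step0 A) a b.
Proof. rewrite eq_cls; exact: (crst_sub stepK_ZDU a b). Qed.

Lemma not_ZDU_open : DU_top A (fun t => ~ ZDU A t).
Proof.
move=> I.
exact: (neq_open (tU_topology I) (tE_metrizable I) (@sc_continuous I) (@zr_continuous I)).
Qed.

Lemma sub_open_Zset (V : VK A -> Prop) : (forall p, V p -> Zset p) ->
  sub_open (VK_top A) Zset V <-> sub_open (DU_top A) (ZDU A) (fun t => V (piVK A t)).
Proof.
move=> VZ; apply: (sub_open_quot _ Zset_piVK not_ZDU_open VZ).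
exact: (sum_topology tU_topology).
Qed.

Lemma FI_set1 i p : FI A [set i] p <-> F0 A i p.
Proof. by split=> [/(_ i (set11 i))|Fp j /set1P ->]. Qed.

Lemma inK_set1 i p : F0 A i p -> inK A [set i].
Proof. by move=> Fp; split; [apply/set0Pn; exists i; apply: set11|exists p; apply/FI_set1]. Qed.

Lemma zero_lift_ex p : exists t : DU A, ZDU A t /\ psi A (projT2 t) = p.
Proof.
have [i Fp] : exists i, F0 A i p by case: HA => _ [cover _]; apply: cover.
pose I : Idx A := exist _ [set i] (inK_set1 Fp).
have [g [_ [[gZ _] [_ psig]]]] := psi_homeo I.
have FIp : FI A (proj1_sig I) p by apply/FI_set1.
by exists (existT _ I (g p)); split; [apply: gZ|apply: psig].
Qed.

Definition zero_lift (p : X) : DU A :=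
  proj1_sig (constructive_indefinite_description _ (zero_lift_ex p)).

Lemma zero_liftP p : ZDU A (zero_lift p) /\ psi A (projT2 (zero_lift p)) = p.
Proof. exact: proj2_sig (constructive_indefinite_description _ (zero_lift_ex p)). Qed.

Definition iotaK (p : X) : VK A := piVK A (zero_lift p).

Lemma piVK_zero_superset (I K : Idx A) (x : U A (proj1_sig I)) :
  proj1_sig I \subset proj1_sig K -> Zs A x -> FI A (proj1_sig K) (psi A x) ->
  exists y, Zs A y /\ psi A y = psi A x /\ piVK A (existT _ I x) = piVK A (existT _ K y).
Proof.
move=> IK Zx Fx; case: (boolP (proj1_sig I == proj1_sig K)) => [/eqP IeK|IneK].
  have -> : K = I by case: I K IK x Zx Fx IeK => [I ?] [K ?] /= *; apply: subset_eq_compat.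
  by exists x.
have IpK : proj1_sig I \proper proj1_sig K by rewrite properEneq IneK.
have Ux := UIJ_Zs IpK Zx Fx; have [Zy psiy] := phi_Zs IpK Ux Zx.
by exists (phi A _ _ x); split=> //; split=> //; apply/eq_cls/rst_step.
Qed.

(* Two zero-set points with the same footprint image meet in the chart of [I :|: J]. *)
Lemma piVK_zero_psi (I J : Idx A) (x : U A (proj1_sig I)) (y : U A (proj1_sig J)) :
  Zs A x -> Zs A y -> psi A x = psi A y ->
  piVK A (existT _ I x) = piVK A (existT _ J y).
Proof.
move=> Zx Zy psixy.
have [g [[Fpsi _] _]] := psi_homeo I; have [h [[Gpsi _] _]] := psi_homeo J.
have FIJ : FI A (proj1_sig I :|: proj1_sig J) (psi A x).
  by move=> k /setUP [kI|kJ]; [apply: Fpsi|rewrite psixy; apply: Gpsi].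
have IJ_in : inK A (proj1_sig I :|: proj1_sig J).
  split; last by exists (psi A x).
  by rewrite setU_eq0 negb_and; case: I {g Fpsi FIJ} x Zx psixy => [I [/= -> _]].
pose K : Idx A := exist _ _ IJ_in.
have [x' [Zx' [psix' ->]]] := piVK_zero_superset (K := K) (subsetUl _ _) Zx FIJ.
rewrite psixy in FIJ.
have [y' [Zy' [psiy' ->]]] := piVK_zero_superset (K := K) (subsetUr _ _) Zy FIJ.
by rewrite (psi_inj Zx' Zy') // psix' psiy'.
Qed.

Lemma iotaK_psi (I : Idx A) (x : U A (proj1_sig I)) :
  Zs A x -> iotaK (psi A x) = piVK A (existT _ I x).
Proof.
have [] := zero_liftP (psi A x); rewrite /iotaK; case: (zero_lift _) => J y /= Zy psiy Zx.
exact: piVK_zero_psi.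
Qed.

Definition psiK (p : VK A) : X := psi A (projT2 (repr p)).

Lemma psiK_piVK t : ZDU A t -> psiK (piVK A t) = psi A (projT2 t).
Proof.
have tr : crst (DU A) (stepK A) t (repr (piVK A t)) by apply/eq_cls; rewrite reprK.
by move=> Zt; rewrite /psiK (crst_const_on stepK_ZDU stepK_psi tr Zt).
Qed.

Lemma iotaK_continuous : IsTopology tX -> continuous tX (VK_top A) iotaK.
Proof.
move=> tX_top; apply: (continuous_of_open_cover tX_top
  (F := fun i : {i | inK A [set i]} => F0 A (proj1_sig i))).
- by move=> i; case: HA => F0_open _; apply: F0_open.
- move=> p; have [i Fp] : exists i, F0 A i p by case: HA => _ [cover _]; apply: cover.
  by exists (exist _ i (inK_set1 Fp)).
- move=> [i i_in] W Wopen /=; pose I : Idx A := exist _ [set i] i_in.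
  have [g [_ [[gZ gcont] [_ psig]]]] := psi_homeo I.
  apply: sub_open_ext (gcont _ (Wopen I)) => q Fq.
  have FIq : FI A (proj1_sig I) q by apply/FI_set1.
  by split=> //; rewrite -{2}(psig q FIq) (iotaK_psi (gZ q FIq)).
Qed.

Lemma psiK_continuous : cont_on (VK_top A) Zset tX (fun _ => True) psiK.
Proof.
split=> // O Oopen.
apply: (sub_open_ext (P := Zset) (V := fun p => Zset p /\ O (psiK p))).
  by move=> p; tauto.
apply/sub_open_Zset; first by move=> p [].
apply: (@sum_sub_open _ _ (fun I => tU A (proj1_sig I))) => I.
have [g [[_ psicont] _]] := psi_homeo I.
apply: sub_open_ext (psicont O Oopen) => x Zx.
by split=> //; rewrite Zset_piVK psiK_piVK //; tauto.
Qed.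

Lemma iotaK_homeo : IsTopology tX ->
  homeo_on tX (fun _ => True) (VK_top A) Zset iotaK.
Proof.
move=> tX_top; exists psiK; split; [|split; [exact: psiK_continuous|split]].
- split=> [p _|W Wopen]; first exact/Zset_piVK/(proj1 (zero_liftP p)).
  by exists (fun p => W (iotaK p)); split=> //; apply: iotaK_continuous.
- by move=> p _; have [Zp psip] := zero_liftP p; rewrite psiK_piVK.
- move=> q; rewrite -(reprK q) Zset_piVK; case: (repr q) => I x Zx.
  by rewrite psiK_piVK // iotaK_psi.
Qed.

End Atlas.

Theorem mainTheorem2 (X : Type) (tX : topology X) (N : nat)
  (A : TopKAtlas X tX N) :
  IsTopology tX -> compact_space tX -> metrizable tX ->
  IsTopKAtlas A ->
  exists (prK : VE A -> VK A) (zK sK : VK A -> VE A),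
    (forall e : DE A, prK (piVE A e) = piVK A (prDU A e)) /\
    (forall t : DU A, zK (piVK A t) = piVE A (zrDU A t)) /\
    (forall t : DU A, sK (piVK A t) = piVE A (scDU A t)) /\
    continuous (VE_top A) (VK_top A) prK /\
    continuous (VK_top A) (VE_top A) zK /\
    continuous (VK_top A) (VE_top A) sK /\
    (forall p, prK (sK p) = p) /\
    (forall p, prK (zK p) = p) /\
    (forall p, sK p = zK p <-> exists t : DU A, ZDU A t /\ piVK A t = p) /\
    (forall a b : DU0 A,
       piVK A (proj1_sig a) = piVK A (proj1_sig b) <->
       clos_refl_sym_trans (DU0 A) (step0 A) a b) /\
    (forall V : VK A -> Prop, (forall p, V p -> sK p = zK p) ->
       (sub_open (VK_top A) (fun p => sK p = zK p) V <->
        sub_open (DU_top A) (ZDU A) (fun t => V (piVK A t)))) /\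
    exists iota : X -> VK A,
      (forall (I : Idx A) (x : U A (proj1_sig I)),
         Zs A x -> iota (psi A x) = piVK A (existT _ I x)) /\
      homeo_on tX (fun _ => True) (VK_top A) (fun p => sK p = zK p) iota.
Proof.
move=> tX_top _ _ HA.
exists (@prK _ _ _ A), (@zK _ _ _ A), (@sK _ _ _ A).
split; first exact: prK_piVE.
split; first exact: zK_piVK.
split; first exact: sK_piVK.
split; first exact: prK_continuous.
split; first exact: zK_continuous.
split; first exact: sK_continuous.
split; first exact: prK_sK.
split; first exact: prK_zK.
split; first exact: Zset_iff.
split; first exact: piVK_DU0.
split; first exact: sub_open_Zset.
exists (iotaK HA); split; first exact: iotaK_psi.
exact: iotaK_homeo.
Qed.
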